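(* Let $n\ge k\ge1$, $l\ge0$, $d=2^n$, $\gamma=3/4$, $\nu=1/2$, and $$\alpha_k=\frac{d^2(d+3)(d\gamma^k+3\nu^k)-4(d+1)(d+2)}{(d^2-1)(d+2)(d+4)},\qquad \beta_k=\frac{d^2(d^2\gamma^k-4)+4}{(d^2-1)(d^2-4)},$$ where for $n=1$ the value of $\beta_1$ is understood as the limit $d\to2$ of the formula $\beta_1=\frac{3d^2-4}{4(d^2-1)}$ (i.e. $\beta_1=\frac{3d^2-4}{4(d^2-1)}$ in general). Then $\alpha_k$ and $\beta_k$ are monotonically increasing in $d$ (over $d=2^n$, $n\ge k$) and monotonically decreasing in $k$; $\lim_{d\to\infty}\alpha_k=\lim_{d\to\infty}\beta_k=\gamma^k$; $0<\alpha_k<\gamma^k$ and $0<\beta_k<\gamma^k$; and $$\gamma^{kl}\Bigl[1-\frac{kl(3d+1)}{3(d^2-1)}\Bigr]\le\alpha_1^{kl}\le\alpha_k^l\le\beta_k^l\le\beta_1^{kl}\le\alpha_1^{kl}+\frac{kld}{d^2-1}\gamma^{kl}.$$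
   Context: Note that $\alpha_1=\frac{3d^2-3d-4}{4(d^2-1)}$ and $\beta_1=\frac{3d^2-4}{4(d^2-1)}$. *)

From Stdlib Require Import Reals Lra Lia.
Open Scope R_scope.

Definition dim (n : nat) : R := 2 ^ n.
Definition gamma : R := 3 / 4.
Definition nu : R := 1 / 2.

Definition alpha (n k : nat) : R :=
  let d := dim n in
  (d ^ 2 * (d + 3) * (d * gamma ^ k + 3 * nu ^ k) - 4 * (d + 1) * (d + 2))
  / ((d ^ 2 - 1) * (d + 2) * (d + 4)).

(* beta_k with d = 2^n; for k = 1 we use the closed form
   (3d^2-4)/(4(d^2-1)), which agrees with the general formula whenever
   d <> 2 and is its limit as d -> 2 (the case n = 1). *)
Definition beta (n k : nat) : R :=
  let d := dim n in
  if Nat.eqb k 1 then (3 * d ^ 2 - 4) / (4 * (d ^ 2 - 1))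
  else (d ^ 2 * (d ^ 2 * gamma ^ k - 4) + 4) / ((d ^ 2 - 1) * (d ^ 2 - 4)).

(* With g = gamma^k and h = nu^k, alpha and beta are explicit rational functions
   of (d, g, h), and every claim reduces to a polynomial inequality in d.  After
   substituting d = 2 + t or d = 4 + t (the relevant lower bounds on d = 2^n)
   these polynomials have nonnegative coefficients in t.  The chain rests on the
   one-step bounds alpha_1 alpha_k <= alpha_(k+1) and beta_(k+1) <= beta_1 beta_k,
   iterated k times; its two ends come from the closed forms
   alpha_1 = 3/4 - (3d+1)/(4(d^2-1)) and beta_1 = 3/4 - 1/(4(d^2-1)), via
   Bernoulli's inequality and x^m - y^m <= m (x - y) c^(m-1) for y <= x <= c. *)

From Stdlib Require Import Reals Lra Psatz Lia.
Open Scope R_scope.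

(* Once [d = c + t] with [t >= 0], a polynomial inequality whose expansion in [t]
   has nonnegative coefficients is closed by [lra], the monomials [t ^ i] being
   treated as atoms known to be nonnegative. *)
Ltac shift_nonneg d c :=
  let t := fresh "t" in
  let Ht := fresh "Ht" in
  let Hpow := fresh "Hpow" in
  assert (exists t, 0 <= t /\ d = c + t) as [t [Ht ->]]
    by (exists (d - c); split; lra);
  assert (Hpow : forall i, 0 <= t ^ i) by (intro; apply pow_le; exact Ht);
  pose proof (Hpow 2%nat); pose proof (Hpow 3%nat); pose proof (Hpow 4%nat);
  pose proof (Hpow 5%nat); pose proof (Hpow 6%nat); pose proof (Hpow 7%nat);
  pose proof (Hpow 8%nat); clear Hpow.

Lemma Rdiv_le_div_cross a b c e : 0 < b -> 0 < e -> a * e <= c * b -> a / b <= c / e.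
Proof.
  intros Hb He H; apply Rmult_le_reg_r with (b * e); [nra|].
  replace (a / b * (b * e)) with (a * e) by (field; lra).
  replace (c / e * (b * e)) with (c * b) by (field; lra).
  exact H.
Qed.

Lemma Rdiv_le_l a b c : 0 < b -> a <= c * b -> a / b <= c.
Proof.
  intros Hb H; apply Rmult_le_reg_r with b; [exact Hb|].
  replace (a / b * b) with a by (field; lra); exact H.
Qed.

Lemma Rdiv_lt_l a b c : 0 < b -> a < c * b -> a / b < c.
Proof.
  intros Hb H; apply Rmult_lt_reg_r with b; [exact Hb|].
  replace (a / b * b) with a by (field; lra); exact H.
Qed.

Lemma Rdiv_mul_div_le a a' c b : 0 < b -> a * a' <= c * b -> a / b * (a' / b) <= c / b.
Proof.
  intros Hb H; replace (a / b * (a' / b)) with (a * a' / (b * b)) by (field; lra).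
  apply Rdiv_le_div_cross; [nra | exact Hb | nra].
Qed.

Lemma Rdiv_le_mul_div c a a' b : 0 < b -> c * b <= a * a' -> c / b <= a / b * (a' / b).
Proof.
  intros Hb H; replace (a / b * (a' / b)) with (a * a' / (b * b)) by (field; lra).
  apply Rdiv_le_div_cross; [exact Hb | nra | nra].
Qed.

Lemma Rle_pow_le1 x m n : 0 <= x <= 1 -> (m <= n)%nat -> x ^ n <= x ^ m.
Proof.
  intros Hx Hmn; replace n with (m + (n - m))%nat by lia; rewrite pow_add.
  assert (x ^ (n - m) <= 1) by (rewrite <- (pow1 (n - m)); apply pow_incr; lra).
  assert (0 <= x ^ m) by (apply pow_le; lra).
  nra.
Qed.

Lemma bernoulli_ineq m x : -1 <= x -> 1 + INR m * x <= (1 + x) ^ m.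
Proof.
  intros Hx; induction m as [|m IH]; [simpl; lra|].
  rewrite S_INR; simpl.
  assert (0 <= INR m) by apply pos_INR.
  assert (0 <= INR m * x ^ 2) by (apply Rmult_le_pos; [lra | apply pow2_ge_0]).
  assert ((1 + x) * (1 + INR m * x) <= (1 + x) * (1 + x) ^ m)
    by (apply Rmult_le_compat_l; lra).
  nra.
Qed.

Lemma pow_sub_le m x y c :
  0 <= y -> y <= x -> x <= c -> c * (x ^ m - y ^ m) <= INR m * (x - y) * c ^ m.
Proof.
  intros Hy Hyx Hxc; induction m as [|m IH]; [simpl; lra|].
  rewrite S_INR; simpl.
  assert (0 <= y ^ m) by (apply pow_le; lra).
  assert (y ^ m <= c ^ m) by (apply pow_incr; lra).
  assert (0 <= INR m * (x - y) * c ^ m)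
    by (apply Rmult_le_pos; [apply Rmult_le_pos; [apply pos_INR | lra] | apply pow_le; lra]).
  assert (x * (c * (x ^ m - y ^ m)) <= x * (INR m * (x - y) * c ^ m))
    by (apply Rmult_le_compat_l; lra).
  assert (x * (INR m * (x - y) * c ^ m) <= c * (INR m * (x - y) * c ^ m))
    by (apply Rmult_le_compat_r; lra).
  assert (c * y ^ m * (x - y) <= c * c ^ m * (x - y))
    by (apply Rmult_le_compat_r; [lra | apply Rmult_le_compat_l; lra]).
  nra.
Qed.

Lemma Un_cv_dist_le (u e : nat -> R) (l : R) (N : nat) :
  (forall n, (N <= n)%nat -> Rabs (u n - l) <= e n) -> Un_cv e 0 -> Un_cv u l.
Proof.
  intros Hue He eps Heps.
  destruct (He eps Heps) as [M HM]; exists (Nat.max N M); intros n Hn.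
  specialize (HM n ltac:(lia)); unfold R_dist in *; rewrite Rminus_0_r in HM.
  pose proof (Hue n ltac:(lia)); pose proof (Rle_abs (e n)); lra.
Qed.

Definition alpha_fun (d g h : R) : R :=
  (d ^ 2 * (d + 3) * (d * g + 3 * h) - 4 * (d + 1) * (d + 2))
  / ((d ^ 2 - 1) * (d + 2) * (d + 4)).

Definition beta_fun (d g : R) : R :=
  (d ^ 2 * (d ^ 2 * g - 4) + 4) / ((d ^ 2 - 1) * (d ^ 2 - 4)).

Definition beta1_fun (d : R) : R := 3 / 4 - 1 / (4 * (d ^ 2 - 1)).

Lemma alpha_den_pos d : 2 <= d -> 0 < (d ^ 2 - 1) * (d + 2) * (d + 4).
Proof. intros Hd; shift_nonneg d 2; lra. Qed.

Lemma beta_den_pos d : 4 <= d -> 0 < (d ^ 2 - 1) * (d ^ 2 - 4).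
Proof. intros Hd; shift_nonneg d 4; lra. Qed.

Lemma alpha_fun_three_quarters_half d :
  2 <= d -> alpha_fun d (3 / 4) (1 / 2) = 3 / 4 - (3 * d + 1) / (4 * (d ^ 2 - 1)).
Proof. intros Hd; unfold alpha_fun; field; shift_nonneg d 2; repeat split; lra. Qed.

Lemma beta_fun_three_quarters d : 4 <= d -> beta_fun d (3 / 4) = beta1_fun d.
Proof. intros Hd; unfold beta_fun, beta1_fun; field; split; shift_nonneg d 4; lra. Qed.

Lemma alpha_fun_pos d g h :
  2 <= d -> 0 < g -> 0 < h -> 3 / 2 <= g * d -> 1 <= h * d -> 0 < alpha_fun d g h.
Proof.
  intros Hd Hg Hh Hgd Hhd; apply Rdiv_lt_0_compat; [|exact (alpha_den_pos d Hd)].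
  assert (0 <= d * (d + 3) * (d * (g * d - 3 / 2) + 3 * (h * d - 1)))
    by (apply Rmult_le_pos; nra).
  shift_nonneg d 2; lra.
Qed.

Lemma alpha_fun_lt d g h : 2 <= d -> 0 < h -> h < g -> g < 1 -> alpha_fun d g h < g.
Proof.
  intros Hd Hh Hhg Hg; apply Rdiv_lt_l; [exact (alpha_den_pos d Hd)|].
  assert (0 < d ^ 3 * (g - h)) by (apply Rmult_lt_0_compat; [apply pow_lt|]; lra).
  assert (0 < d ^ 2 * (7 * g - 9 * h + 4)) by (apply Rmult_lt_0_compat; [apply pow_lt|]; lra).
  assert (0 < d * (12 - 6 * g)) by (apply Rmult_lt_0_compat; lra).
  lra.
Qed.

Lemma alpha_fun_le_double d g h :
  2 <= d -> 0 < g <= 3 / 4 -> 0 < h <= 2 / 3 * g -> alpha_fun d g h <= alpha_fun (2 * d) g h.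
Proof.
  intros Hd Hg Hh; unfold alpha_fun.
  apply Rdiv_le_div_cross; [exact (alpha_den_pos d Hd) | apply alpha_den_pos; lra|].
  (* Writing s for d, the cross difference is g P1 + (1 - 4g/3) P2 + (2g/3 - h) P3 plus
     a polynomial with nonnegative coefficients in t = d - 2. *)
  shift_nonneg d 2.
  set (s := 2 + t).
  assert (0 <= s) by (unfold s; lra).
  assert (0 <= g * (48 * s + 156 * s ^ 2 + 288 * s ^ 3 + 327 * s ^ 4 + 198 * s ^ 5
                    + 57 * s ^ 6 + 6 * s ^ 7))
    by (apply Rmult_le_pos; [lra | unfold s; lra]).
  assert (0 <= (1 - 4 / 3 * g) * (48 * s + 264 * s ^ 2 + 552 * s ^ 3 + 552 * s ^ 4
                                  + 264 * s ^ 5 + 48 * s ^ 6))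
    by (apply Rmult_le_pos; [lra | unfold s; lra]).
  assert (0 <= (2 / 3 * g - h) * (216 * s ^ 2 + 276 * s ^ 3 + 108 * s ^ 4 + 132 * s ^ 5
                                  + 108 * s ^ 6 + 24 * s ^ 7))
    by (apply Rmult_le_pos; [lra | unfold s; lra]).
  unfold s in *; lra.
Qed.

Lemma alpha_fun_scale_le d g h :
  2 <= d -> 0 <= g -> 0 <= h -> alpha_fun d (3 / 4 * g) (1 / 2 * h) <= alpha_fun d g h.
Proof.
  intros Hd Hg Hh; unfold alpha_fun; unfold Rdiv.
  apply Rmult_le_compat_r; [left; apply Rinv_0_lt_compat, alpha_den_pos, Hd|].
  assert (0 <= d ^ 2 * (d + 3)) by (apply Rmult_le_pos; [apply pow_le|]; lra).
  assert (0 <= d ^ 2 * (d + 3) * (d * (g / 4) + 3 * (h / 2))) by (apply Rmult_le_pos; nra).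
  lra.
Qed.

Lemma alpha_fun_dist_le d g h :
  2 <= d -> 0 < h < g -> g < 1 -> Rabs (alpha_fun d g h - g) <= 40 / d.
Proof.
  intros Hd Hh Hg.
  pose proof (alpha_fun_lt d g h Hd ltac:(lra) ltac:(lra) Hg).
  rewrite Rabs_left by lra.
  replace (- (alpha_fun d g h - g))
    with ((g * ((d ^ 2 - 1) * (d + 2) * (d + 4))
           - (d ^ 2 * (d + 3) * (d * g + 3 * h) - 4 * (d + 1) * (d + 2)))
          / ((d ^ 2 - 1) * (d + 2) * (d + 4)))
    by (unfold alpha_fun; field; shift_nonneg d 2; repeat split; lra).
  apply Rdiv_le_div_cross; [exact (alpha_den_pos d Hd) | lra|].
  assert (0 <= d * g * (6 * d + 8)) by (apply Rmult_le_pos; [apply Rmult_le_pos|]; lra).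
  assert (0 <= d * h * (3 * d ^ 3 + 9 * d ^ 2))
    by (apply Rmult_le_pos; [apply Rmult_le_pos|]; shift_nonneg d 2; lra).
  assert (0 <= d * (1 - g) * (3 * d ^ 3 + 7 * d ^ 2))
    by (apply Rmult_le_pos; [apply Rmult_le_pos|]; shift_nonneg d 2; lra).
  shift_nonneg d 2; lra.
Qed.

Lemma beta_fun_pos d g : 4 <= d -> 4 <= g * d ^ 2 -> 0 < beta_fun d g.
Proof.
  intros Hd Hg; apply Rdiv_lt_0_compat; [|exact (beta_den_pos d Hd)].
  assert (0 <= d ^ 2 * (d ^ 2 * g - 4)) by (apply Rmult_le_pos; [apply pow_le|]; lra).
  lra.
Qed.

Lemma beta_fun_lt d g : 4 <= d -> 0 < g <= 9 / 16 -> beta_fun d g < g.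
Proof.
  intros Hd Hg; apply Rdiv_lt_l; [exact (beta_den_pos d Hd)|].
  assert (0 <= (d ^ 2 - 16) * (4 - 5 * g)) by (apply Rmult_le_pos; shift_nonneg d 4; lra).
  lra.
Qed.

Lemma beta_fun_le_double d g : 4 <= d -> 0 < g <= 9 / 16 -> beta_fun d g <= beta_fun (2 * d) g.
Proof.
  intros Hd Hg; unfold beta_fun.
  apply Rdiv_le_div_cross; [exact (beta_den_pos d Hd) | apply beta_den_pos; lra|].
  shift_nonneg d 4.
  assert (0 <= (9 / 16 - g) * (60 * (4 + t) ^ 4 * ((4 + t) ^ 2 - 1)))
    by (apply Rmult_le_pos; lra).
  lra.
Qed.

Lemma beta_fun_scale_le d g : 4 <= d -> 0 <= g -> beta_fun d (3 / 4 * g) <= beta_fun d g.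
Proof.
  intros Hd Hg; unfold beta_fun, Rdiv.
  apply Rmult_le_compat_r; [left; apply Rinv_0_lt_compat, beta_den_pos, Hd|].
  assert (0 <= d ^ 2 * d ^ 2 * g) by (apply Rmult_le_pos; [apply Rmult_le_pos; apply pow_le|]; lra).
  lra.
Qed.

Lemma beta_fun_dist_le d g : 4 <= d -> 0 <= g <= 1 -> Rabs (beta_fun d g - g) <= 40 / d.
Proof.
  intros Hd Hg.
  replace (beta_fun d g - g)
    with ((d ^ 2 * (5 * g - 4) + 4 * (1 - g)) / ((d ^ 2 - 1) * (d ^ 2 - 4)))
    by (unfold beta_fun; field; shift_nonneg d 4; split; lra).
  assert (0 <= d * d ^ 2 * g) by (apply Rmult_le_pos; [apply Rmult_le_pos; [|apply pow_le]|]; lra).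
  assert (0 <= d * d ^ 2 * (1 - g)) by (apply Rmult_le_pos; [apply Rmult_le_pos; [|apply pow_le]|]; lra).
  assert (0 <= d * g) by (apply Rmult_le_pos; lra).
  assert (0 <= d * (1 - g)) by (apply Rmult_le_pos; lra).
  apply Rabs_le; split.
  - replace (- (40 / d)) with (-40 / d) by (field; lra).
    apply Rdiv_le_div_cross; [lra | exact (beta_den_pos d Hd)|].
    shift_nonneg d 4; lra.
  - apply Rdiv_le_div_cross; [exact (beta_den_pos d Hd) | lra|].
    shift_nonneg d 4; lra.
Qed.

Lemma beta1_fun_pos d : 2 <= d -> 0 < beta1_fun d.
Proof.
  intros Hd; unfold beta1_fun.
  assert (1 / (4 * (d ^ 2 - 1)) <= 1 / 12) by (apply Rdiv_le_div_cross; shift_nonneg d 2; lra).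
  lra.
Qed.

Lemma beta1_fun_lt d : 2 <= d -> beta1_fun d < 3 / 4.
Proof.
  intros Hd; unfold beta1_fun.
  assert (0 < 1 / (4 * (d ^ 2 - 1))) by (apply Rdiv_lt_0_compat; shift_nonneg d 2; lra).
  lra.
Qed.

Lemma beta1_fun_le_double d : 2 <= d -> beta1_fun d <= beta1_fun (2 * d).
Proof.
  intros Hd; unfold beta1_fun.
  assert (1 / (4 * ((2 * d) ^ 2 - 1)) <= 1 / (4 * (d ^ 2 - 1)))
    by (apply Rdiv_le_div_cross; shift_nonneg d 2; lra).
  lra.
Qed.

Lemma alpha_fun_le_beta_fun d g h :
  4 <= d -> 0 < g -> 0 <= h <= 2 / 3 * g -> 3 / 2 <= g * d -> alpha_fun d g h <= beta_fun d g.
Proof.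
  intros Hd Hg Hh Hgd; unfold alpha_fun, beta_fun.
  apply Rdiv_le_div_cross; [apply alpha_den_pos; lra | exact (beta_den_pos d Hd)|].
  assert (0 <= (2 / 3 * g - h) * (3 * d * (d + 3) * (d - 2)))
    by (apply Rmult_le_pos; [lra | shift_nonneg d 4; lra]).
  assert (0 <= (g * d - 3 / 2) * (d ^ 2 + 4 * d + 12))
    by (apply Rmult_le_pos; [lra | shift_nonneg d 4; lra]).
  assert (0 <= 3 * g * d ^ 2 * (d + 2) - 3 * h * d * (d + 3) * (d - 2) - 12 * (d + 1))
    by (shift_nonneg d 4; lra).
  assert (0 <= ((d ^ 2 - 1) * (d + 2) * d)
               * (3 * g * d ^ 2 * (d + 2) - 3 * h * d * (d + 3) * (d - 2) - 12 * (d + 1)))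
    by (apply Rmult_le_pos; [shift_nonneg d 4|]; lra).
  lra.
Qed.

Lemma alpha_fun_three_quarters_half_le_beta1 d :
  2 <= d -> alpha_fun d (3 / 4) (1 / 2) <= beta1_fun d.
Proof.
  intros Hd; rewrite alpha_fun_three_quarters_half by exact Hd; unfold beta1_fun.
  assert (1 / (4 * (d ^ 2 - 1)) <= (3 * d + 1) / (4 * (d ^ 2 - 1)))
    by (apply Rdiv_le_div_cross; shift_nonneg d 2; lra).
  lra.
Qed.

(* The gap condition [5/2 <= (g - h) d] fails for [(g, h) = (3/4, 1/2)] and [d = 4],
   whence the separate squaring lemma below. *)
Lemma alpha_fun_mul_le d g h :
  4 <= d -> 0 <= h <= g -> 5 / 2 <= (g - h) * d ->
  alpha_fun d (3 / 4) (1 / 2) * alpha_fun d g h <= alpha_fun d (3 / 4 * g) (1 / 2 * h).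
Proof.
  intros Hd Hh Hgap; apply Rdiv_mul_div_le; [apply alpha_den_pos; lra|].
  assert (0 <= h * (144 * d ^ 2 + 396 * d ^ 3 + 314 * d ^ 4 + 96 * d ^ 5 + 10 * d ^ 6))
    by (apply Rmult_le_pos; [lra | shift_nonneg d 4; lra]).
  assert (0 <= ((g - h) * d - 5 / 2)
               * (24 * d ^ 2 + 98 * d ^ 3 + 87 * d ^ 4 + 28 * d ^ 5 + 3 * d ^ 6))
    by (apply Rmult_le_pos; [lra | shift_nonneg d 4; lra]).
  shift_nonneg d 4; lra.
Qed.

Lemma alpha_fun_three_quarters_half_sq_le d :
  4 <= d ->
  alpha_fun d (3 / 4) (1 / 2) * alpha_fun d (3 / 4) (1 / 2)
    <= alpha_fun d (3 / 4 * (3 / 4)) (1 / 2 * (1 / 2)).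
Proof. intros Hd; apply Rdiv_mul_div_le; [apply alpha_den_pos; lra|]; shift_nonneg d 4; lra. Qed.

Lemma beta_fun_scale_le_mul d g :
  4 <= d -> 0 <= g <= 1 -> beta_fun d (3 / 4 * g) <= beta1_fun d * beta_fun d g.
Proof.
  intros Hd Hg; rewrite <- beta_fun_three_quarters by exact Hd.
  apply Rdiv_le_mul_div; [exact (beta_den_pos d Hd)|].
  assert (0 <= ((d ^ 2 - 4) * d ^ 2) * ((4 - g) * d ^ 2 - 4))
    by (apply Rmult_le_pos; [shift_nonneg d 4; lra | nra]).
  lra.
Qed.

Lemma dim_S n : dim (S n) = 2 * dim n.
Proof. reflexivity. Qed.

Lemma dim_ge_pow2 k n : (k <= n)%nat -> 2 ^ k <= dim n.
Proof. intros Hkn; apply Rle_pow; [lra | exact Hkn]. Qed.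

Lemma dim_ge2 n : (1 <= n)%nat -> 2 <= dim n.
Proof. intros Hn; pose proof (dim_ge_pow2 1 n Hn); simpl in *; lra. Qed.

Lemma dim_ge4 n : (2 <= n)%nat -> 4 <= dim n.
Proof. intros Hn; pose proof (dim_ge_pow2 2 n Hn); simpl in *; lra. Qed.

Lemma gamma_pow_pos k : 0 < gamma ^ k.
Proof. apply pow_lt; unfold gamma; lra. Qed.

Lemma nu_pow_pos k : 0 < nu ^ k.
Proof. apply pow_lt; unfold nu; lra. Qed.

Lemma gamma_pow_le m k : (m <= k)%nat -> gamma ^ k <= gamma ^ m.
Proof. apply Rle_pow_le1; unfold gamma; lra. Qed.

Lemma gamma_pow_S k : gamma ^ S k = 3 / 4 * gamma ^ k.
Proof. reflexivity. Qed.

Lemma nu_pow_S k : nu ^ S k = 1 / 2 * nu ^ k.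
Proof. reflexivity. Qed.

Lemma gamma_pow_le_one k : gamma ^ k <= 1.
Proof. pose proof (gamma_pow_le 0 k (Nat.le_0_l k)); unfold gamma in *; simpl in *; lra. Qed.

Lemma gamma_pow_le_3_4 k : (1 <= k)%nat -> gamma ^ k <= 3 / 4.
Proof. intros Hk; pose proof (gamma_pow_le 1 k Hk); unfold gamma in *; simpl in *; lra. Qed.

Lemma gamma_pow_le_9_16 k : (2 <= k)%nat -> gamma ^ k <= 9 / 16.
Proof. intros Hk; pose proof (gamma_pow_le 2 k Hk); unfold gamma in *; simpl in *; lra. Qed.

Lemma nu_pow_le_gamma_pow k : (1 <= k)%nat -> nu ^ k <= 2 / 3 * gamma ^ k.
Proof.
  intros Hk; replace nu with (2 / 3 * gamma) by (unfold nu, gamma; field).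
  rewrite Rpow_mult_distr.
  pose proof (Rle_pow_le1 (2 / 3) 1 k ltac:(lra) Hk); simpl in *.
  pose proof (gamma_pow_pos k); nra.
Qed.

Lemma gamma_pow_mul_pow2 k : gamma ^ k * 2 ^ k = (3 / 2) ^ k.
Proof. rewrite <- Rpow_mult_distr; f_equal; unfold gamma; field. Qed.

Lemma nu_pow_mul_pow2 k : nu ^ k * 2 ^ k = 1.
Proof. rewrite <- Rpow_mult_distr, <- (pow1 k); f_equal; unfold nu; field. Qed.

Lemma gamma_pow_mul_dim k n : (1 <= k)%nat -> (k <= n)%nat -> 3 / 2 <= gamma ^ k * dim n.
Proof.
  intros Hk Hkn; pose proof (dim_ge_pow2 k n Hkn); pose proof (gamma_pow_pos k).
  pose proof (gamma_pow_mul_pow2 k); pose proof (Rle_pow (3 / 2) 1 k ltac:(lra) Hk).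
  simpl in *; nra.
Qed.

Lemma nu_pow_mul_dim k n : (k <= n)%nat -> 1 <= nu ^ k * dim n.
Proof.
  intros Hkn; pose proof (dim_ge_pow2 k n Hkn); pose proof (nu_pow_pos k).
  pose proof (nu_pow_mul_pow2 k); nra.
Qed.

Lemma gamma_nu_gap_mul_dim k n :
  (2 <= k)%nat -> (S k <= n)%nat -> 5 / 2 <= (gamma ^ k - nu ^ k) * dim n.
Proof.
  intros Hk Hkn; pose proof (dim_ge_pow2 (S k) n Hkn); simpl in *.
  pose proof (gamma_pow_mul_pow2 k); pose proof (nu_pow_mul_pow2 k).
  pose proof (Rle_pow (3 / 2) 2 k ltac:(lra) Hk); simpl in *.
  pose proof (nu_pow_le_gamma_pow k ltac:(lia)); pose proof (gamma_pow_pos k).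
  assert (0 < 2 ^ k) by (apply pow_lt; lra).
  nra.
Qed.

Lemma alphaE n k : alpha n k = alpha_fun (dim n) (gamma ^ k) (nu ^ k).
Proof. reflexivity. Qed.

Lemma alpha_oneE n :
  (1 <= n)%nat -> alpha n 1 = 3 / 4 - (3 * dim n + 1) / (4 * (dim n ^ 2 - 1)).
Proof.
  intros Hn; rewrite alphaE, !pow_1; unfold gamma, nu.
  apply alpha_fun_three_quarters_half, dim_ge2, Hn.
Qed.

Lemma beta_oneE n : (1 <= n)%nat -> beta n 1 = beta1_fun (dim n).
Proof.
  intros Hn; pose proof (dim_ge2 n Hn).
  unfold beta, beta1_fun; simpl; field; nra.
Qed.

Lemma betaE n k : (2 <= n)%nat -> beta n k = beta_fun (dim n) (gamma ^ k).
Proof.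
  intros Hn; unfold beta; destruct (Nat.eqb_spec k 1) as [->|]; [|reflexivity].
  rewrite pow_1; unfold gamma; rewrite beta_fun_three_quarters by (apply dim_ge4, Hn).
  exact (beta_oneE n ltac:(lia)).
Qed.

Lemma alpha_beta_le_succ_dim n k :
  (1 <= k)%nat -> (k <= n)%nat -> alpha n k <= alpha (S n) k /\ beta n k <= beta (S n) k.
Proof.
  intros Hk Hkn; pose proof (gamma_pow_pos k); pose proof (nu_pow_pos k).
  pose proof (gamma_pow_le_3_4 k Hk); pose proof (nu_pow_le_gamma_pow k Hk).
  split.
  - rewrite !alphaE, dim_S; apply alpha_fun_le_double; [apply dim_ge2; lia | lra | lra].
  - destruct (Nat.eq_dec k 1) as [->|Hk1].
    + rewrite !beta_oneE, dim_S by lia; apply beta1_fun_le_double, dim_ge2; lia.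
    + pose proof (gamma_pow_le_9_16 k ltac:(lia)).
      rewrite !betaE, dim_S by lia; apply beta_fun_le_double; [apply dim_ge4; lia | lra].
Qed.

Lemma alpha_beta_succ_le n k :
  (1 <= k)%nat -> (S k <= n)%nat -> alpha n (S k) <= alpha n k /\ beta n (S k) <= beta n k.
Proof.
  intros Hk Hkn; pose proof (gamma_pow_pos k); pose proof (nu_pow_pos k).
  split.
  - rewrite !alphaE; apply alpha_fun_scale_le; [apply dim_ge2; lia | lra | lra].
  - rewrite !betaE by lia; apply beta_fun_scale_le; [apply dim_ge4; lia | lra].
Qed.

Lemma alpha_beta_cvg k :
  (1 <= k)%nat -> Un_cv (fun n => alpha n k) (gamma ^ k) /\ Un_cv (fun n => beta n k) (gamma ^ k).
Proof.
  intros Hk; pose proof (gamma_pow_pos k); pose proof (nu_pow_pos k).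
  pose proof (gamma_pow_le_3_4 k Hk); pose proof (nu_pow_le_gamma_pow k Hk).
  split; apply (Un_cv_dist_le _ (fun n => 40 / dim n) _ 2); try exact (cv_pow_half 40);
    intros n Hn.
  - rewrite alphaE; apply alpha_fun_dist_le; [apply dim_ge2; lia | lra | lra].
  - rewrite betaE by lia; apply beta_fun_dist_le; [apply dim_ge4; lia | lra].
Qed.

Lemma alpha_bounds n k : (1 <= k)%nat -> (k <= n)%nat -> 0 < alpha n k < gamma ^ k.
Proof.
  intros Hk Hkn; pose proof (gamma_pow_pos k); pose proof (nu_pow_pos k).
  pose proof (gamma_pow_le_3_4 k Hk); pose proof (nu_pow_le_gamma_pow k Hk).
  rewrite alphaE; split.
  - apply alpha_fun_pos; [apply dim_ge2; lia | lra | lra | |].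
    + apply gamma_pow_mul_dim; lia.
    + apply nu_pow_mul_dim; lia.
  - apply alpha_fun_lt; [apply dim_ge2; lia | lra | lra | lra].
Qed.

Lemma beta_bounds n k : (1 <= k)%nat -> (k <= n)%nat -> 0 < beta n k < gamma ^ k.
Proof.
  intros Hk Hkn; destruct (Nat.eq_dec k 1) as [->|Hk1].
  - rewrite beta_oneE, pow_1 by lia; pose proof (dim_ge2 n Hkn); unfold gamma.
    split; [apply beta1_fun_pos | apply beta1_fun_lt]; lra.
  - pose proof (gamma_pow_pos k); pose proof (gamma_pow_le_9_16 k ltac:(lia)).
    pose proof (dim_ge4 n ltac:(lia)); pose proof (gamma_pow_mul_dim k n ltac:(lia) Hkn).
    rewrite betaE by lia; split.
    + apply beta_fun_pos; nra.
    + apply beta_fun_lt; lra.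
Qed.

Lemma alpha_le_beta n k : (1 <= k)%nat -> (k <= n)%nat -> alpha n k <= beta n k.
Proof.
  intros Hk Hkn; destruct (Nat.eq_dec k 1) as [->|Hk1].
  - rewrite alphaE, beta_oneE, !pow_1 by lia; unfold gamma, nu.
    apply alpha_fun_three_quarters_half_le_beta1, dim_ge2; lia.
  - pose proof (nu_pow_pos k); pose proof (nu_pow_le_gamma_pow k Hk).
    rewrite alphaE, betaE by lia; apply alpha_fun_le_beta_fun.
    + apply dim_ge4; lia.
    + apply gamma_pow_pos.
    + lra.
    + apply gamma_pow_mul_dim; lia.
Qed.

Lemma alpha_one_pow_le j n : (1 <= j)%nat -> (j <= n)%nat -> alpha n 1 ^ j <= alpha n j.
Proof.
  induction j as [|j IH]; intros Hj Hjn; [lia|].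
  destruct (Nat.eq_dec j 0) as [->|Hj0]; [simpl; lra|].
  pose proof (alpha_bounds n 1 (le_n 1) ltac:(lia)).
  assert (alpha n 1 * alpha n 1 ^ j <= alpha n 1 * alpha n j)
    by (apply Rmult_le_compat_l; [lra | apply IH; lia]).
  enough (alpha n 1 * alpha n j <= alpha n (S j)) by (simpl; lra).
  rewrite !alphaE, (gamma_pow_S j), (nu_pow_S j), !pow_1.
  destruct (Nat.eq_dec j 1) as [->|Hj1].
  - rewrite !pow_1; unfold gamma, nu.
    apply alpha_fun_three_quarters_half_sq_le, dim_ge4; lia.
  - unfold gamma at 1, nu at 1.
    pose proof (nu_pow_pos j); pose proof (nu_pow_le_gamma_pow j ltac:(lia)).
    pose proof (gamma_pow_pos j).
    apply alpha_fun_mul_le; [apply dim_ge4; lia | lra | apply gamma_nu_gap_mul_dim; lia].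
Qed.

Lemma beta_le_beta_one_pow j n : (1 <= j)%nat -> (j <= n)%nat -> beta n j <= beta n 1 ^ j.
Proof.
  induction j as [|j IH]; intros Hj Hjn; [lia|].
  destruct (Nat.eq_dec j 0) as [->|Hj0]; [simpl; lra|].
  pose proof (beta_bounds n 1 (le_n 1) ltac:(lia)).
  assert (beta n 1 * beta n j <= beta n 1 * beta n 1 ^ j)
    by (apply Rmult_le_compat_l; [lra | apply IH; lia]).
  enough (beta n (S j) <= beta n 1 * beta n j) by (simpl; lra).
  pose proof (gamma_pow_pos j); pose proof (gamma_pow_le_one j).
  rewrite (betaE n (S j)), (betaE n j), beta_oneE by lia.
  rewrite gamma_pow_S; apply beta_fun_scale_le_mul; [apply dim_ge4; lia | lra].
Qed.

Lemma alpha_one_pow_lower n m :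
  (1 <= n)%nat ->
  gamma ^ m * (1 - INR m * (3 * dim n + 1) / (3 * (dim n ^ 2 - 1))) <= alpha n 1 ^ m.
Proof.
  intros Hn; pose proof (dim_ge2 n Hn).
  set (e := (3 * dim n + 1) / (3 * (dim n ^ 2 - 1))).
  assert (e <= 1) by (apply Rdiv_le_l; nra).
  replace (alpha n 1) with (gamma * (1 + - e))
    by (rewrite alpha_oneE by exact Hn; unfold e, gamma; field; nra).
  replace (1 - INR m * (3 * dim n + 1) / (3 * (dim n ^ 2 - 1))) with (1 + INR m * - e)
    by (unfold e; field; nra).
  rewrite Rpow_mult_distr; apply Rmult_le_compat_l.
  - apply pow_le; unfold gamma; lra.
  - apply bernoulli_ineq; lra.
Qed.

Lemma beta_one_pow_upper n m :
  (1 <= n)%nat ->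
  beta n 1 ^ m <= alpha n 1 ^ m + INR m * dim n / (dim n ^ 2 - 1) * gamma ^ m.
Proof.
  intros Hn; pose proof (dim_ge2 n Hn).
  pose proof (alpha_bounds n 1 (le_n 1) Hn); pose proof (beta_bounds n 1 (le_n 1) Hn).
  pose proof (alpha_le_beta n 1 (le_n 1) Hn); unfold gamma in *; rewrite pow_1 in *.
  pose proof (pow_sub_le m (beta n 1) (alpha n 1) (3 / 4) ltac:(lra) ltac:(lra) ltac:(lra)).
  (* beta_1 - alpha_1 = 3d / (4 (d^2 - 1)) *)
  replace (INR m * dim n / (dim n ^ 2 - 1) * (3 / 4) ^ m)
    with (4 / 3 * (INR m * (beta n 1 - alpha n 1) * (3 / 4) ^ m))
    by (rewrite alpha_oneE, beta_oneE by exact Hn; unfold beta1_fun; field; nra).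
  lra.
Qed.

Theorem mainTheorem12 :
  (forall n k : nat, (1 <= k)%nat -> (k <= n)%nat ->
     alpha n k <= alpha (S n) k /\ beta n k <= beta (S n) k) /\
  (forall n k : nat, (1 <= k)%nat -> (S k <= n)%nat ->
     alpha n (S k) <= alpha n k /\ beta n (S k) <= beta n k) /\
  (forall k : nat, (1 <= k)%nat ->
     Un_cv (fun n => alpha n k) (gamma ^ k) /\
     Un_cv (fun n => beta n k) (gamma ^ k)) /\
  (forall n k l : nat, (1 <= k)%nat -> (k <= n)%nat ->
     let d := dim n in
     (0 < alpha n k < gamma ^ k) /\ (0 < beta n k < gamma ^ k) /\
     gamma ^ (k * l) * (1 - INR (k * l) * (3 * d + 1) / (3 * (d ^ 2 - 1)))
       <= alpha n 1 ^ (k * l) /\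
     alpha n 1 ^ (k * l) <= alpha n k ^ l /\
     alpha n k ^ l <= beta n k ^ l /\
     beta n k ^ l <= beta n 1 ^ (k * l) /\
     beta n 1 ^ (k * l)
       <= alpha n 1 ^ (k * l) + INR (k * l) * d / (d ^ 2 - 1) * gamma ^ (k * l)).
Proof.
  split; [exact alpha_beta_le_succ_dim|].
  split; [exact alpha_beta_succ_le|].
  split; [exact alpha_beta_cvg|].
  intros n k l Hk Hkn d.
  pose proof (alpha_bounds n 1 (le_n 1) ltac:(lia)).
  pose proof (alpha_bounds n k Hk Hkn); pose proof (beta_bounds n k Hk Hkn).
  pose proof (alpha_le_beta n k Hk Hkn).
  repeat split; try lra.
  - apply alpha_one_pow_lower; lia.
  - rewrite pow_mult; apply pow_incr; split; [apply pow_le; lra | apply alpha_one_pow_le; lia].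
  - apply pow_incr; lra.
  - rewrite pow_mult; apply pow_incr; split; [lra | apply beta_le_beta_one_pow; lia].
  - apply beta_one_pow_upper; lia.
Qed.
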